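(* Let $i,p\ge-1$, $q\ge0$, $0\le j\le 2^i$, $0\le m\le 2^p$, $0\le n\le 2^q$, and let $F(t):=\int_0^t\varphi_{pm}(s)\chi_{qn}(s)\,ds$. Then the coefficient $F_{ij}$ of $F$ satisfies \[ |F_{ij}|\le 2^{-2(i\vee p\vee q)+p+q}, \] except in the case $p<q=i$, in which one has $|F_{ij}|\le1$.
   Context: Index set: pairs $(p,m)$ with either $p=-1,m=0$, or $p\in\mathbb{N}=\{0,1,2,\dots\}$ and $0\le m\le 2^p$. For $p\in\mathbb{N}$, $1\le m\le 2^p$ set $t^0_{pm}=(m-1)2^{-p}$, $t^1_{pm}=(2m-1)2^{-p-1}$, $t^2_{pm}=m2^{-p}$. Rescaled Haar functions: for $p\in\mathbb{N}$, $1\le m\le 2^p$, $\chi_{pm}=2^p$ on $[t^0_{pm},t^1_{pm})$, $=-2^p$ on $[t^1_{pm},t^2_{pm})$, $=0$ elsewhere; $\chi_{00}\equiv1$; $\chi_{p0}\equiv0$ for $p\ge1$. Rescaled Schauder functions: $\varphi_{pm}(t)=\int_0^t\chi_{pm}(s)\,ds$ for $p\in\mathbb{N}$, and $\varphi_{-10}\equiv1$. For continuous $f:[0,1]\to\mathbb{R}$ the coefficients are $f_{-10}=f(0)$, $f_{00}=f(1)-f(0)$, $f_{p0}=0$ for $p\ge1$, $f_{pm}=2f(t^1_{pm})-f(t^0_{pm})-f(t^2_{pm})$ for $p\in\mathbb{N},m\ge1$. $a\vee b=\max(a,b)$. *)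

From Stdlib Require Import Reals ZArith Lra.
Open Scope R_scope.

Definition t0 (p m : nat) : R := (INR m - 1) / 2 ^ p.
Definition t1 (p m : nat) : R := (2 * INR m - 1) / 2 ^ (S p).
Definition t2 (p m : nat) : R := INR m / 2 ^ p.

Definition chi (p m : nat) (t : R) : R :=
  match m with
  | O => match p with O => 1 | S _ => 0 end
  | S _ =>
      if Rle_dec (t0 p m) t then
        if Rlt_dec t (t1 p m) then 2 ^ p
        else if Rlt_dec t (t2 p m) then - 2 ^ p else 0
      else 0
  end.

Definition index_ok (p : Z) (m : nat) : Prop :=
  (p = (-1)%Z /\ m = O) \/ ((0 <= p)%Z /\ (m <= 2 ^ Z.to_nat p)%nat).

Definition is_primitive (g F : R -> R) : Prop :=
  forall (t : R) (pr : Riemann_integrable g 0 t), F t = RiemannInt pr.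

Definition is_schauder (p : Z) (m : nat) (phi : R -> R) : Prop :=
  if Z.eqb p (-1) then forall t, phi t = 1
  else is_primitive (chi (Z.to_nat p) m) phi.

Definition coef (f : R -> R) (i : Z) (j : nat) : R :=
  if Z.eqb i (-1) then f 0
  else match j with
       | O => if Z.eqb i 0 then f 1 - f 0 else 0
       | S _ => let k := Z.to_nat i in
                2 * f (t1 k j) - f (t0 k j) - f (t2 k j)
       end.

From Stdlib Require Import Reals ZArith Lra Lia List.
From Coquelicot Require Import Coquelicot.
Open Scope R_scope.

(** For [i >= 0] the coefficient [F_ij] is the integral of [g = phi_pm chi_qn] against
    the Haar function of a dyadic interval [I] of length [2^-i] (for [i = -1] it is
    [F 0 = 0]). Trivially [|F_ij| <= |I| 2^q = 2^(q-i)], the exceptional bound, and when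
    [p] dominates, [phi_pm] is supported on an interval of length [2^-p], giving
    [2^(q-p)]. Otherwise one uses that [phi_pm] has slopes at most [2^p] and kinks only on
    the grid of mesh [2^-(p+1)], that [chi_qn] jumps only on the grid of mesh [2^-(q+1)],
    and that the Haar integral of an affine function of slope [c] over an interval of
    half-length [h] is [-c h^2]. When [i] dominates, [g] itself is affine on [I], giving
    [2^(p+q-2i-2)]. When [q] dominates, the three grid points of [I] avoid the interior
    of the support of [chi_qn], so [F_ij] is a sum of at most two copies of
    [int phi_pm chi_qn], which is the Haar integral of [2^q phi_pm] at level [q] and hence
    at most [2^(p-q-2)] in absolute value. *)

Lemma pow2_pos (k : nat) : 0 < 2 ^ k.
Proof. apply pow_lt; lra. Qed.

Lemma powerRZ2_le (z1 z2 : Z) : (z1 <= z2)%Z -> powerRZ 2 z1 <= powerRZ 2 z2.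
Proof.
  intros Hz. rewrite !powerRZ_Rpower by lra.
  apply Rle_Rpower; [lra | apply IZR_le; exact Hz].
Qed.

Lemma inv_pow2_powerRZ (k : nat) : / 2 ^ k = powerRZ 2 (- Z.of_nat k).
Proof. rewrite powerRZ_neg', <- pow_powerRZ. reflexivity. Qed.

Lemma INR_pow2 (k : nat) : INR (2 ^ k) = 2 ^ k.
Proof. rewrite pow_INR. reflexivity. Qed.

Lemma not_between (u v x : R) : ~ (u < x < v) -> x <= u \/ v <= x.
Proof. intros H. destruct (Rle_lt_dec x u); [now left|]. right. lra. Qed.

Definition dyadic_free (L : nat) (u v : R) : Prop :=
  forall c : nat, ~ (u < INR c / 2 ^ L < v).

Lemma dyadic_free_cell (L M K : nat) :
  (L <= M)%nat -> dyadic_free L (INR K / 2 ^ M) (INR (S K) / 2 ^ M).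
Proof.
  intros HLM c [Hlo Hhi].
  assert (E : INR c / 2 ^ L = INR (c * 2 ^ (M - L)) / 2 ^ M).
  { rewrite mult_INR, INR_pow2. replace M with (L + (M - L))%nat at 2 by lia.
    rewrite pow_add. field. split; apply pow_nonzero; lra. }
  rewrite E in Hlo, Hhi. unfold Rdiv in Hlo, Hhi.
  pose proof (Rinv_0_lt_compat _ (pow2_pos M)) as HM.
  apply Rmult_lt_reg_r, INR_lt in Hlo, Hhi; auto. lia.
Qed.

Definition dyadic_grid (L : nat) : list R :=
  map (fun c => INR c / 2 ^ L) (seq 0 (S (2 ^ L))).

Lemma dyadic_free_of_grid (L : nat) (u v : R) :
  v <= 1 -> (forall x, In x (dyadic_grid L) -> ~ (u < x < v)) -> dyadic_free L u v.
Proof.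
  intros Hv Hgrid c Hc. destruct (le_lt_dec c (2 ^ L)) as [Hle | Hgt].
  - apply (Hgrid (INR c / 2 ^ L)); auto.
    apply (in_map (fun c => INR c / 2 ^ L)), in_seq. lia.
  - apply lt_INR in Hgt. rewrite INR_pow2 in Hgt.
    assert (1 < INR c / 2 ^ L).
    { apply Rmult_lt_reg_r with (2 ^ L); [apply pow2_pos|].
      unfold Rdiv. rewrite Rmult_assoc, Rinv_l by (apply pow_nonzero; lra). lra. }
    lra.
Qed.

Lemma t_spacing (k m : nat) :
  t1 k m = t0 k m + / 2 ^ S k /\ t2 k m = t1 k m + / 2 ^ S k.
Proof. unfold t0, t1, t2. simpl. pose proof (pow2_pos k). split; field; lra. Qed.

Lemma t_cell (k m : nat) : (1 <= m)%nat ->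
  t0 k m = INR (m - 1) / 2 ^ k /\ t2 k m = INR (S (m - 1)) / 2 ^ k.
Proof.
  intros Hm. unfold t0, t2. rewrite minus_INR by lia. simpl (INR 1).
  split; [reflexivity|]. do 2 f_equal. lia.
Qed.

Lemma t_in_unit (k m : nat) : (1 <= m <= 2 ^ k)%nat -> 0 <= t0 k m /\ t2 k m <= 1.
Proof.
  intros [Hm1 Hm2]. pose proof (pow2_pos k). destruct (t_cell k m Hm1) as [-> _].
  split; [apply Rdiv_le_0_compat; auto; apply pos_INR|].
  unfold t2. apply le_INR in Hm2. rewrite INR_pow2 in Hm2.
  apply Rmult_le_reg_r with (2 ^ k); auto.
  unfold Rdiv. rewrite Rmult_assoc, Rinv_l; lra.
Qed.

Lemma t_outside_free (k m : nat) (u v : R) : (1 <= m)%nat -> dyadic_free (S k) u v ->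
  (t0 k m <= u \/ v <= t0 k m) /\ (t1 k m <= u \/ v <= t1 k m) /\
  (t2 k m <= u \/ v <= t2 k m).
Proof.
  intros Hm Hfree. pose proof (pow2_pos k).
  assert (E0 : t0 k m = INR (2 * (m - 1)) / 2 ^ S k)
    by (unfold t0; rewrite mult_INR, minus_INR by lia; simpl; field; lra).
  assert (E1 : t1 k m = INR (2 * m - 1) / 2 ^ S k)
    by (unfold t1; rewrite minus_INR, mult_INR by lia; reflexivity).
  assert (E2 : t2 k m = INR (2 * m) / 2 ^ S k)
    by (unfold t2; rewrite mult_INR; simpl; field; lra).
  rewrite E0, E1, E2. repeat split; apply not_between, Hfree.
Qed.

Lemma chi_bound (k m : nat) (s : R) : Rabs (chi k m s) <= 2 ^ k.
Proof.
  pose proof (pow2_pos k). unfold chi.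
  destruct m; [destruct k; simpl in *|]; repeat (destruct Rle_dec || destruct Rlt_dec);
    unfold Rabs; destruct Rcase_abs; lra.
Qed.

Lemma chi_const_on_free (k m : nat) (u v s w : R) : dyadic_free (S k) u v ->
  u < s < v -> u < w < v -> chi k m s = chi k m w.
Proof.
  intros Hfree Hs Hw. unfold chi. destruct m as [|m']; [reflexivity|].
  destruct (t_outside_free k (S m') u v ltac:(lia) Hfree) as (H0 & H1 & H2).
  repeat (destruct Rle_dec || destruct Rlt_dec); lra.
Qed.

Lemma chi_outside (k m : nat) (s : R) : (1 <= m)%nat ->
  s < t0 k m \/ t2 k m <= s -> chi k m s = 0.
Proof.
  intros Hm Hs. destruct (t_spacing k m).
  pose proof (Rinv_0_lt_compat _ (pow2_pos (S k))).
  unfold chi. destruct m; [lia|]. repeat (destruct Rle_dec || destruct Rlt_dec); lra.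
Qed.

Lemma chi_left (k m : nat) (s : R) : (1 <= m)%nat ->
  t0 k m < s < t1 k m -> chi k m s = 2 ^ k.
Proof.
  intros Hm Hs. unfold chi. destruct m; [lia|].
  repeat (destruct Rle_dec || destruct Rlt_dec); lra.
Qed.

Lemma chi_right (k m : nat) (s : R) : (1 <= m)%nat ->
  t1 k m < s < t2 k m -> chi k m s = - 2 ^ k.
Proof.
  intros Hm Hs. destruct (t_spacing k m). unfold chi. destruct m; [lia|].
  repeat (destruct Rle_dec || destruct Rlt_dec); lra.
Qed.

Lemma ex_RInt_piecewise_continuous (f : R -> R) (l : list R) (a b : R) : a <= b ->
  (forall u v, a <= u -> u < v -> v <= b -> (forall x, In x l -> ~ (u < x < v)) ->
     exists h : R -> R, (forall z, continuous h z) /\ forall s, u < s < v -> f s = h s) ->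
  ex_RInt f a b.
Proof.
  revert a b. induction l as [|x l IH]; intros a b Hab Hpieces.
  - destruct (Req_dec a b) as [<- | Hne]; [apply ex_RInt_point|].
    destruct (Hpieces a b) as (h & Hcont & Heq); try lra; [intros ? []|].
    apply (ex_RInt_ext h); [|now apply (@ex_RInt_continuous R_CompleteNormedModule)].
    rewrite Rmin_left, Rmax_right by lra. intros s Hs. symmetry. auto.
  - assert (Hsub : forall a' b', a <= a' -> a' <= b' -> b' <= b -> ~ (a' < x < b') ->
              ex_RInt f a' b').
    { intros a' b' Ha' Hab' Hb' Hx. apply IH; auto.
      intros u v Hu Huv Hv Hl. apply Hpieces; try lra.
      intros y [<- | Hy]; [intros Hy; apply Hx; lra | auto]. }
    destruct (Rlt_dec a x); [destruct (Rlt_dec x b)|].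
    + apply ex_RInt_Chasles with x; apply Hsub; lra.
    + apply Hsub; lra.
    + apply Hsub; lra.
Qed.

Lemma RInt_split (f : R -> R) (a b c : R) : ex_RInt f a b -> ex_RInt f b c ->
  RInt f a c = RInt f a b + RInt f b c :> R.
Proof. intros Hab Hbc. rewrite <- (RInt_Chasles f a b c); auto. Qed.

Lemma RInt_const_on (f : R -> R) (c a b : R) : a <= b ->
  (forall s, a < s < b -> f s = c) -> RInt f a b = c * (b - a) :> R.
Proof.
  intros Hab Hf. rewrite (RInt_ext f (fun _ => c)).
  - rewrite RInt_const. unfold scal; simpl. unfold mult; simpl. ring.
  - rewrite Rmin_left, Rmax_right by lra. auto.
Qed.

Lemma RInt_affine_on (f : R -> R) (c0 c1 a b : R) : a <= b ->
  (forall s, a < s < b -> f s = c0 + c1 * s) ->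
  RInt f a b = c0 * (b - a) + c1 * (b ^ 2 - a ^ 2) / 2 :> R.
Proof.
  intros Hab Hf. rewrite (RInt_ext f (fun s => c0 + c1 * s))
    by (rewrite Rmin_left, Rmax_right by lra; auto).
  set (G := fun s => c0 * s + c1 * s ^ 2 / 2).
  assert (HG : is_RInt (fun s => c0 + c1 * s) a b (minus (G b) (G a))).
  { apply (@is_RInt_derive R_CompleteNormedModule).
    - intros x _. unfold G. auto_derive; [exact I|].
      field.
    - intros x _. apply (@ex_derive_continuous R_AbsRing R_NormedModule).
      auto_derive. exact I. }
  rewrite (is_RInt_unique _ _ _ _ HG). unfold G, minus, plus, opp; simpl. field.
Qed.

Definition schauder (k m : nat) (s : R) : R :=
  match m with
  | O => match k with O => s | S _ => 0 end
  | S _ => if Rle_dec s (t0 k m) then 0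
           else if Rle_dec s (t1 k m) then 2 ^ k * (s - t0 k m)
           else if Rle_dec s (t2 k m) then 2 ^ k * (t2 k m - s) else 0
  end.

Lemma schauder_bound (k m : nat) (s : R) : 0 <= s <= 1 -> Rabs (schauder k m s) <= 1.
Proof.
  intros Hs. unfold schauder. destruct m as [|m'].
  - destruct k; rewrite ?Rabs_R0, ?Rabs_pos_eq; lra.
  - destruct (t_spacing k (S m')) as [E1 E2]. pose proof (pow2_pos k).
    assert (Hhalf : 2 ^ k * / 2 ^ S k = / 2) by (simpl; field; lra).
    repeat destruct Rle_dec; rewrite ?Rabs_R0; try lra; rewrite Rabs_pos_eq; nra.
Qed.

Lemma schauder_outside (k m : nat) (s : R) : (1 <= m)%nat ->
  s <= t0 k m \/ t2 k m <= s -> schauder k m s = 0.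
Proof.
  intros Hm Hs. destruct (t_spacing k m).
  pose proof (Rinv_0_lt_compat _ (pow2_pos (S k))).
  unfold schauder. destruct m; [lia|].
  repeat destruct Rle_dec; try lra. replace s with (t2 k (S m)) by lra. ring.
Qed.

Lemma schauder_affine_on_free (k m : nat) (u v s w : R) : dyadic_free (S k) u v ->
  u < s < v -> u < w < v -> schauder k m s = schauder k m w + chi k m w * (s - w).
Proof.
  intros Hfree Hs Hw. unfold schauder, chi. destruct m as [|m']; [destruct k; ring|].
  destruct (t_outside_free k (S m') u v ltac:(lia) Hfree) as (H0 & H1 & H2).
  repeat (destruct Rle_dec || destruct Rlt_dec); try ring; lra.
Qed.

Lemma ex_RInt_chi (k m : nat) (a b : R) : 0 <= a -> a <= b -> b <= 1 -> ex_RInt (chi k m) a b.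
Proof.
  intros Ha Hab Hb. apply (ex_RInt_piecewise_continuous _ (dyadic_grid (S k))); auto.
  intros u v Hu Huv Hv Hgrid. exists (fun _ => chi k m ((u + v) / 2)).
  split; [intros; apply continuous_const|].
  intros x Hx. apply (chi_const_on_free k m u v); [apply dyadic_free_of_grid|..]; auto; lra.
Qed.

Lemma RInt_chi (k m : nat) (s : R) : 0 <= s <= 1 -> RInt (chi k m) 0 s = schauder k m s :> R.
Proof.
  intros Hs. unfold schauder. destruct m as [|m'].
  { destruct k; [rewrite (RInt_const_on _ 1 0 s) | rewrite (RInt_const_on _ 0 0 s)];
      (ring || lra || reflexivity). }
  set (m := S m') in *. assert (Hm : (1 <= m)%nat) by lia.
  destruct (t_spacing k m) as [E1 E2].
  pose proof (Rinv_0_lt_compat _ (pow2_pos (S k))).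
  assert (Hhalf : 2 ^ k * / 2 ^ S k = / 2) by (simpl; pose proof (pow2_pos k); field; lra).
  assert (Hpos : 0 <= t0 k m) by (destruct (t_cell k m Hm) as [-> _];
    apply Rdiv_le_0_compat; [apply pos_INR | apply pow2_pos]).
  assert (Hex : forall a b, 0 <= a -> a <= b -> b <= s -> ex_RInt (chi k m) a b)
    by (intros; apply ex_RInt_chi; lra).
  assert (Hzero : forall a b, a <= b -> (b <= t0 k m \/ t2 k m <= a) ->
            RInt (chi k m) a b = 0 :> R).
  { intros a b Hab Hab'. rewrite (RInt_const_on _ 0) by
      (auto; intros x Hx; apply chi_outside; auto; lra). ring. }
  assert (Hleft : forall a b, t0 k m <= a -> a <= b -> b <= t1 k m ->
            RInt (chi k m) a b = 2 ^ k * (b - a) :> R).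
  { intros a b Ha Hab Hb. apply RInt_const_on; auto. intros x Hx. apply chi_left; auto; lra. }
  assert (Hright : forall a b, t1 k m <= a -> a <= b -> b <= t2 k m ->
            RInt (chi k m) a b = - 2 ^ k * (b - a) :> R).
  { intros a b Ha Hab Hb. apply RInt_const_on; auto. intros x Hx. apply chi_right; auto; lra. }
  destruct (Rle_dec s (t0 k m)); [apply Hzero; lra|].
  rewrite (RInt_split _ 0 (t0 k m) s), (Hzero 0) by (apply Hex || lra; lra).
  destruct (Rle_dec s (t1 k m)); [rewrite Hleft by lra; ring|].
  rewrite (RInt_split _ (t0 k m) (t1 k m) s), Hleft by (apply Hex || lra; lra).
  destruct (Rle_dec s (t2 k m)); [rewrite Hright by lra; nra|].
  rewrite (RInt_split _ (t1 k m) (t2 k m) s), Hright, (Hzero (t2 k m))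
    by (apply Hex || lra; lra).
  nra.
Qed.

Record schauder_like (p : Z) (phi : R -> R) : Prop := {
  schauder_like_bounded : forall s, 0 <= s <= 1 -> Rabs (phi s) <= 1;
  schauder_like_affine : forall u v, 0 <= u -> v <= 1 -> dyadic_free (Z.to_nat (p + 1)) u v ->
    exists c0 c1, Rabs c1 <= powerRZ 2 p /\ forall s, u < s < v -> phi s = c0 + c1 * s;
  schauder_like_support : (0 <= p)%Z -> exists lo hi, 0 <= lo <= hi /\ hi <= 1 /\
    hi - lo <= powerRZ 2 (- p) /\ forall s, 0 <= s <= 1 -> s < lo \/ hi < s -> phi s = 0 }.

Lemma schauder_like_const (phi : R -> R) : (forall t, phi t = 1) -> schauder_like (-1) phi.
Proof.
  intros Hone. split.
  - intros s _. rewrite Hone, Rabs_R1. lra.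
  - intros u v _ _ _. exists 1, 0. split.
    + rewrite Rabs_R0. apply powerRZ_le. lra.
    + intros s _. rewrite Hone. ring.
  - lia.
Qed.

Lemma schauder_like_schauder (k m : nat) (phi : R -> R) : (m <= 2 ^ k)%nat ->
  (forall s, 0 <= s <= 1 -> phi s = schauder k m s) -> schauder_like (Z.of_nat k) phi.
Proof.
  intros Hm Hphi. split.
  - intros s Hs. rewrite Hphi by auto. apply schauder_bound; auto.
  - intros u v Hu Hv Hfree. replace (Z.to_nat (Z.of_nat k + 1)) with (S k) in Hfree by lia.
    set (w := (u + v) / 2). destruct (Rlt_dec u v) as [Huv | Huv].
    2: { exists 0, 0. split; [rewrite Rabs_R0; apply powerRZ_le; lra | intros s Hs; lra]. }
    exists (schauder k m w - chi k m w * w), (chi k m w). split.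
    + rewrite <- pow_powerRZ. apply chi_bound.
    + intros s Hs. rewrite Hphi by lra.
      rewrite (schauder_affine_on_free k m u v s w) by (auto; unfold w; lra). ring.
  - intros _. pose proof (powerRZ_lt 2 (- Z.of_nat k) ltac:(lra)).
    destruct m as [|m']; [destruct k|].
    + exists 0, 1. simpl. repeat split; try lra. intros s Hs Hout. lra.
    + exists 0, 0. repeat split; try lra. intros s Hs _. now rewrite Hphi.
    + destruct (t_in_unit k (S m') ltac:(lia)) as [Hlo Hhi]. destruct (t_spacing k (S m')).
      pose proof (Rinv_0_lt_compat _ (pow2_pos (S k))).
      exists (t0 k (S m')), (t2 k (S m')). repeat split; try lra.
      * rewrite <- inv_pow2_powerRZ. replace (/ 2 ^ k) with (/ 2 ^ S k + / 2 ^ S k)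
          by (simpl; field; apply pow_nonzero; lra). lra.
      * intros s Hs Hout. rewrite Hphi by auto. apply schauder_outside; [lia | lra].
Qed.

Lemma primitive_RInt (g F : R -> R) (t : R) :
  is_primitive g F -> ex_RInt g 0 t -> F t = RInt g 0 t.
Proof. intros HF Hex. rewrite (HF t (ex_RInt_Reals_0 _ _ _ Hex)). symmetry. apply RInt_Reals. Qed.

Lemma is_schauder_like (p : Z) (m : nat) (phi : R -> R) :
  index_ok p m -> is_schauder p m phi -> schauder_like p phi.
Proof.
  unfold is_schauder. intros [[-> ->] | [Hp Hm]] Hphi; [now apply schauder_like_const|].
  replace p with (Z.of_nat (Z.to_nat p)) in * by lia. set (k := Z.to_nat p) in *.
  replace (Z.of_nat k =? -1)%Z with false in Hphi by (symmetry; apply Z.eqb_neq; lia).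
  rewrite Nat2Z.id in Hphi, Hm. apply (schauder_like_schauder k m phi Hm).
  intros s Hs. rewrite <- RInt_chi by auto.
  apply primitive_RInt; auto. apply ex_RInt_chi; lra.
Qed.

(** With [e = -1] this is the integral of [f] against the Haar function of [[a, a + 2h]];
    [e = 1] accounts for the coefficient [f_00 = f 1 - f 0]. *)
Definition haar_sum (f : R -> R) (a h e : R) : R :=
  RInt f a (a + h) + e * RInt f (a + h) (a + h + h).

Lemma coef_minus_one (g F : R -> R) (j : nat) : is_primitive g F -> coef F (-1) j = 0.
Proof.
  intros HF. unfold coef; simpl. rewrite (primitive_RInt g F 0 HF (ex_RInt_point g 0)).
  exact (RInt_point 0 g).
Qed.

Lemma coef_haar_sum (g F : R -> R) (i j : nat) :
  (forall a b, 0 <= a -> a <= b -> b <= 1 -> ex_RInt g a b) -> is_primitive g F ->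
  (j <= 2 ^ i)%nat ->
  coef F (Z.of_nat i) j = 0 \/
  exists K e, (S K <= 2 ^ i)%nat /\ Rabs e = 1 /\ ((1 <= i)%nat -> e = -1) /\
    coef F (Z.of_nat i) j = haar_sum g (INR K / 2 ^ i) (/ 2 ^ S i) e.
Proof.
  intros Hex HF Hj.
  assert (HFR : forall t, 0 <= t <= 1 -> F t = RInt g 0 t)
    by (intros t Ht; apply primitive_RInt; auto; apply Hex; lra).
  unfold coef. replace (Z.of_nat i =? -1)%Z with false by (symmetry; apply Z.eqb_neq; lia).
  unfold haar_sum. destruct j as [|j'].
  - destruct (Z.of_nat i =? 0)%Z eqn:Hi; [|now left].
    apply Z.eqb_eq in Hi. replace i with 0%nat in * by lia.
    right. exists 0%nat, 1. repeat split; [simpl; lia | apply Rabs_R1 | intros; lia |].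
    replace (INR 0 / 2 ^ 0) with 0 by (simpl; field).
    replace (/ 2 ^ 1) with (/ 2) by (simpl; field).
    replace (0 + / 2 + / 2) with 1 by field.
    rewrite !HFR, (RInt_split _ 0 (0 + / 2) 1) by (apply Hex || lra; lra).
    rewrite (RInt_point 0 g : RInt g 0 0 = 0 :> R). ring.
  - right. exists j', (-1). rewrite Nat2Z.id.
    repeat split; [lia | rewrite Rabs_left; lra |].
    destruct (t_cell i (S j') ltac:(lia)) as [E0 _]. destruct (t_spacing i (S j')) as [E1 E2].
    destruct (t_in_unit i (S j') ltac:(lia)) as [Hlo Hhi].
    pose proof (Rinv_0_lt_compat _ (pow2_pos (S i))).
    replace (INR j' / 2 ^ i) with (t0 i (S j')) by (rewrite E0; do 3 f_equal; lia).
    rewrite <- E1. replace (t1 i (S j') + / 2 ^ S i) with (t2 i (S j')) by lra.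
    rewrite !HFR by lra.
    rewrite (RInt_split _ 0 (t0 i (S j')) (t1 i (S j'))) by (apply Hex; lra).
    rewrite (RInt_split _ 0 (t1 i (S j')) (t2 i (S j'))) by (apply Hex; lra).
    rewrite (RInt_split _ 0 (t0 i (S j')) (t1 i (S j'))) by (apply Hex; lra).
    ring.
Qed.

Lemma haar_points (i K : nat) :
  INR K / 2 ^ i = INR (2 * K) / 2 ^ S i /\
  INR K / 2 ^ i + / 2 ^ S i = INR (2 * K + 1) / 2 ^ S i /\
  INR K / 2 ^ i + / 2 ^ S i + / 2 ^ S i = INR (2 * K + 2) / 2 ^ S i /\
  INR K / 2 ^ i + / 2 ^ S i + / 2 ^ S i = INR (S K) / 2 ^ i.
Proof.
  pose proof (pow2_pos i). rewrite <- tech_pow_Rmult, S_INR, !plus_INR, !mult_INR.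
  replace (INR 2) with 2 by (simpl; lra). rewrite INR_1.
  repeat split; field; lra.
Qed.

Lemma haar_points_in_unit (i K : nat) : (S K <= 2 ^ i)%nat ->
  0 <= INR K / 2 ^ i /\ INR K / 2 ^ i + / 2 ^ S i + / 2 ^ S i <= 1.
Proof.
  intros HK. pose proof (pow2_pos i). destruct (haar_points i K) as (_ & _ & _ & ->).
  split; [apply Rdiv_le_0_compat; auto; apply pos_INR|].
  apply le_INR in HK. rewrite INR_pow2 in HK.
  apply Rmult_le_reg_r with (2 ^ i); auto. unfold Rdiv. rewrite Rmult_assoc, Rinv_l; lra.
Qed.

Lemma haar_scale (p : Z) (q r : nat) :
  powerRZ 2 p * 2 ^ q * (/ 2 ^ S r) ^ 2 = powerRZ 2 (p + Z.of_nat q - 2 * Z.of_nat r - 2).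
Proof.
  replace ((/ 2 ^ S r) ^ 2) with (/ 2 ^ S r * / 2 ^ S r) by ring.
  rewrite inv_pow2_powerRZ, pow_powerRZ, <- !Rmult_assoc, <- !powerRZ_add by lra.
  f_equal. lia.
Qed.

Section Product.

Variables (p : Z) (phi : R -> R) (q n : nat).
Hypothesis Hphi : schauder_like p phi.
Hypothesis Hn : (n <= 2 ^ q)%nat.

Local Notation g := (fun s => phi s * chi q n s).
Local Notation L := (Z.to_nat (p + 1)).

Lemma product_affine_on_free (u v : R) : 0 <= u -> v <= 1 -> u < v ->
  dyadic_free L u v -> dyadic_free (S q) u v ->
  exists c0 c1, Rabs c1 <= powerRZ 2 p * 2 ^ q /\ forall s, u < s < v -> g s = c0 + c1 * s.
Proof.
  intros Hu Hv Huv HL Hq.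
  destruct (schauder_like_affine _ _ Hphi u v Hu Hv HL) as (a0 & a1 & Ha1 & Haff).
  set (C := chi q n ((u + v) / 2)).
  exists (a0 * C), (a1 * C). split.
  - rewrite Rabs_mult. apply Rmult_le_compat; auto using Rabs_pos. apply chi_bound.
  - intros s Hs. rewrite Haff, (chi_const_on_free q n u v s ((u + v) / 2)); auto.
    + fold C. ring.
    + lra.
Qed.

Lemma product_ex_RInt (a b : R) : 0 <= a -> a <= b -> b <= 1 -> ex_RInt g a b.
Proof.
  intros Ha Hab Hb.
  apply (ex_RInt_piecewise_continuous _ (dyadic_grid L ++ dyadic_grid (S q))); auto.
  intros u v Hu Huv Hv Hgrid.
  destruct (product_affine_on_free u v) as (c0 & c1 & _ & Haff); try lra;
    try (apply dyadic_free_of_grid; [lra|]; intros x Hx; apply Hgrid, in_or_app; auto).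
  exists (fun s => c0 + c1 * s). split; auto.
  intros z. apply (@ex_derive_continuous R_AbsRing R_NormedModule). auto_derive. exact I.
Qed.

Lemma product_abs_le (s : R) : 0 <= s <= 1 -> Rabs (g s) <= 2 ^ q.
Proof.
  intros Hs. cbv beta. rewrite Rabs_mult.
  pose proof (schauder_like_bounded _ _ Hphi s Hs). pose proof (chi_bound q n s).
  pose proof (Rabs_pos (phi s)). pose proof (Rabs_pos (chi q n s)). nra.
Qed.

Lemma RInt_abs_product_le (a b : R) : 0 <= a -> a <= b -> b <= 1 ->
  RInt (fun s => Rabs (g s)) a b <= (b - a) * 2 ^ q.
Proof.
  intros Ha Hab Hb. apply Rle_trans with (RInt (fun _ => 2 ^ q) a b).
  - apply RInt_le; auto.
    + apply (ex_RInt_norm g), product_ex_RInt; auto.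
    + apply ex_RInt_const.
    + intros s Hs. apply product_abs_le. lra.
  - rewrite (RInt_const_on _ (2 ^ q)) by auto. lra.
Qed.

Lemma haar_sum_product_le_RInt_abs (a h e : R) : 0 <= a -> 0 <= h -> a + h + h <= 1 ->
  Rabs e = 1 -> Rabs (haar_sum g a h e) <= RInt (fun s => Rabs (g s)) a (a + h + h).
Proof.
  intros Ha Hh Hb He. unfold haar_sum.
  assert (Hex : forall x y, a <= x -> x <= y -> y <= a + h + h -> ex_RInt g x y)
    by (intros; apply product_ex_RInt; lra).
  rewrite (RInt_split (fun s => Rabs (g s)) a (a + h)) by (apply (ex_RInt_norm g), Hex; lra).
  assert (Rabs (RInt g a (a + h)) <= RInt (fun s => Rabs (g s)) a (a + h))
    by (apply abs_RInt_le; [lra | apply Hex; lra]).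
  assert (Rabs (RInt g (a + h) (a + h + h)) <= RInt (fun s => Rabs (g s)) (a + h) (a + h + h))
    by (apply abs_RInt_le; [lra | apply Hex; lra]).
  eapply Rle_trans; [apply Rabs_triang|]. rewrite Rabs_mult, He. lra.
Qed.

Lemma haar_sum_product_le_width (a h e : R) : 0 <= a -> 0 <= h -> a + h + h <= 1 ->
  Rabs e = 1 -> Rabs (haar_sum g a h e) <= (h + h) * 2 ^ q.
Proof.
  intros Ha Hh Hb He. eapply Rle_trans; [apply haar_sum_product_le_RInt_abs; auto|].
  replace (h + h) with (a + h + h - a) by ring. apply RInt_abs_product_le; lra.
Qed.

Lemma haar_sum_product_le_support (a h e : R) : (0 <= p)%Z -> 0 <= a -> 0 <= h ->
  a + h + h <= 1 -> Rabs e = 1 -> Rabs (haar_sum g a h e) <= powerRZ 2 (- p) * 2 ^ q.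
Proof.
  intros Hp Ha Hh Hb He.
  destruct (schauder_like_support _ _ Hphi Hp) as (lo & hi & Hlohi & Hhi & Hlen & Hzero).
  set (G := fun s => Rabs (g s)).
  assert (Hex : forall x y, 0 <= x -> x <= y -> y <= 1 -> ex_RInt G x y)
    by (intros; apply (ex_RInt_norm g), product_ex_RInt; auto).
  assert (HG : forall x y, 0 <= x -> x <= y -> y <= 1 -> 0 <= RInt G x y)
    by (intros; apply RInt_ge_0; auto; intros; apply Rabs_pos).
  assert (Hout : forall x y, 0 <= x -> x <= y -> y <= 1 -> (y <= lo \/ hi <= x) ->
            RInt G x y = 0 :> R).
  { intros x y Hx Hxy Hy Hxy'. rewrite (RInt_const_on _ 0) by
      (auto; intros s Hs; unfold G; rewrite Hzero by lra; rewrite Rmult_0_l; apply Rabs_R0).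
    ring. }
  assert (Hsupp : RInt G 0 1 = RInt G lo hi :> R).
  { rewrite (RInt_split G 0 lo 1), (RInt_split G lo hi 1), (Hout 0 lo), (Hout hi 1)
      by (apply Hex || lra; lra). ring. }
  assert (Hwhole : RInt G a (a + h + h) <= RInt G lo hi).
  { rewrite <- Hsupp, (RInt_split G 0 a 1), (RInt_split G a (a + h + h) 1)
      by (apply Hex; lra).
    assert (0 <= RInt G 0 a) by (apply HG; lra).
    assert (0 <= RInt G (a + h + h) 1) by (apply HG; lra). lra. }
  eapply Rle_trans; [apply haar_sum_product_le_RInt_abs; auto|].
  eapply Rle_trans; [apply Hwhole|].
  eapply Rle_trans; [apply RInt_abs_product_le; lra|].
  apply Rmult_le_compat_r; [apply pow_le; lra | exact Hlen].
Qed.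

Lemma haar_sum_product_fine (i K : nat) : (L <= i)%nat -> (S q <= i)%nat ->
  (S K <= 2 ^ i)%nat ->
  Rabs (haar_sum g (INR K / 2 ^ i) (/ 2 ^ S i) (-1)) <= powerRZ 2 p * 2 ^ q * (/ 2 ^ S i) ^ 2.
Proof.
  intros HL Hq HK. destruct (haar_points_in_unit i K HK) as [Ha Hb].
  destruct (haar_points i K) as (_ & _ & _ & Hcell).
  set (a := INR K / 2 ^ i) in *. set (h := / 2 ^ S i) in *.
  assert (Hh : 0 < h) by apply Rinv_0_lt_compat, pow2_pos.
  assert (HfL : dyadic_free L a (a + h + h)) by (rewrite Hcell; apply dyadic_free_cell; lia).
  assert (Hfq : dyadic_free (S q) a (a + h + h)) by (rewrite Hcell; apply dyadic_free_cell; lia).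
  destruct (product_affine_on_free a (a + h + h) Ha Hb ltac:(lra) HfL Hfq)
    as (c0 & c1 & Hc1 & Haff).
  assert (E : haar_sum g a h (-1) = - c1 * h ^ 2).
  { unfold haar_sum.
    rewrite (RInt_affine_on _ c0 c1 a), (RInt_affine_on _ c0 c1 (a + h))
      by (lra || (intros; apply Haff; lra)).
    field. }
  rewrite E, Rabs_mult, Rabs_Ropp, (Rabs_pos_eq (h ^ 2)) by (apply pow_le; lra).
  apply Rmult_le_compat_r; [apply pow_le; lra | exact Hc1].
Qed.

Lemma RInt_product_haar_cell : (1 <= n)%nat -> (L <= q)%nat ->
  Rabs (RInt g (t0 q n) (t2 q n)) <= powerRZ 2 p * 2 ^ q * (/ 2 ^ S q) ^ 2.
Proof.
  intros Hn1 HL. destruct (t_spacing q n) as [E1 E2].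
  destruct (t_in_unit q n (conj Hn1 Hn)) as [Hlo Hhi]. destruct (t_cell q n Hn1) as [C0 C2].
  destruct (schauder_like_affine _ _ Hphi (t0 q n) (t2 q n) Hlo Hhi) as (c0 & c1 & Hc1 & Haff).
  { rewrite C0, C2. apply dyadic_free_cell; auto. }
  set (h := / 2 ^ S q) in *. assert (Hh : 0 < h) by apply Rinv_0_lt_compat, pow2_pos.
  pose proof (pow2_pos q).
  assert (E : RInt g (t0 q n) (t2 q n) = - (2 ^ q * c1) * h ^ 2 :> R).
  { rewrite (RInt_split _ (t0 q n) (t1 q n)) by (apply product_ex_RInt; lra).
    rewrite (RInt_affine_on _ (2 ^ q * c0) (2 ^ q * c1) (t0 q n)),
      (RInt_affine_on _ (- 2 ^ q * c0) (- 2 ^ q * c1) (t1 q n)); try lra.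
    - rewrite E2, E1. field.
    - intros s Hs. rewrite Haff, chi_right by (auto; lra). ring.
    - intros s Hs. rewrite Haff, chi_left by (auto; lra). ring. }
  rewrite E, !Rabs_mult, Rabs_Ropp, Rabs_mult, (Rabs_pos_eq (2 ^ q)), (Rabs_pos_eq (h ^ 2))
    by (apply pow_le; lra).
  apply Rmult_le_compat_r; [apply pow_le; lra|]. rewrite Rmult_comm.
  apply Rmult_le_compat_r; lra.
Qed.

Lemma RInt_product_outside_cell (x y : R) : (1 <= n)%nat -> 0 <= x -> x <= y -> y <= 1 ->
  ~ (t0 q n < x < t2 q n) -> ~ (t0 q n < y < t2 q n) ->
  Rabs (RInt g x y) <= Rabs (RInt g (t0 q n) (t2 q n)).
Proof.
  intros Hn1 Hx Hxy Hy Hxc Hyc. apply not_between in Hxc, Hyc.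
  destruct (t_in_unit q n (conj Hn1 Hn)) as [Hlo Hhi]. destruct (t_spacing q n).
  pose proof (Rinv_0_lt_compat _ (pow2_pos (S q))).
  assert (Hzero : forall a b, a <= b -> (b <= t0 q n \/ t2 q n <= a) -> RInt g a b = 0 :> R).
  { intros a b Hab Hout. rewrite (RInt_const_on _ 0); [ring | auto |].
    intros s Hs. rewrite chi_outside; [ring | auto | lra]. }
  destruct (Rle_lt_dec y (t0 q n)); [rewrite Hzero, Rabs_R0 by lra; apply Rabs_pos|].
  destruct (Rle_lt_dec (t2 q n) x); [rewrite Hzero, Rabs_R0 by lra; apply Rabs_pos|].
  rewrite (RInt_split _ x (t0 q n) y), (RInt_split _ (t0 q n) (t2 q n) y),
    (Hzero x), (Hzero (t2 q n)) by (apply product_ex_RInt || lra; lra).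
  rewrite Rplus_0_l, Rplus_0_r. lra.
Qed.

Lemma haar_sum_product_coarse (i K : nat) (e : R) : (L <= q)%nat -> (S i <= q)%nat ->
  (S K <= 2 ^ i)%nat -> Rabs e = 1 ->
  Rabs (haar_sum g (INR K / 2 ^ i) (/ 2 ^ S i) e)
  <= 2 * (powerRZ 2 p * 2 ^ q * (/ 2 ^ S q) ^ 2).
Proof.
  intros HL Hi HK He. destruct (haar_points_in_unit i K HK) as [Ha Hb].
  destruct (haar_points i K) as (P0 & P1 & P2 & _).
  assert (Hh : 0 < / 2 ^ S i) by apply Rinv_0_lt_compat, pow2_pos.
  destruct (Nat.eq_dec n 0) as [Hn0 | Hn1].
  - assert (Hg0 : forall x y, x <= y -> RInt g x y = 0 :> R).
    { intros x y Hxy. rewrite (RInt_const_on _ 0); [ring | auto |].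
      intros s _. rewrite Hn0. unfold chi. destruct q; [lia | ring]. }
    unfold haar_sum. rewrite !Hg0, Rmult_0_r, Rplus_0_r, Rabs_R0 by lra.
    rewrite haar_scale. apply Rmult_le_pos; [lra | apply powerRZ_le; lra].
  - assert (Hfree : dyadic_free (S i) (t0 q n) (t2 q n)).
    { destruct (t_cell q n ltac:(lia)) as [-> ->]. apply dyadic_free_cell. lia. }
    pose proof (RInt_product_haar_cell ltac:(lia) HL).
    set (a := INR K / 2 ^ i) in *. set (h := / 2 ^ S i) in *.
    assert (Hl : Rabs (RInt g a (a + h)) <= Rabs (RInt g (t0 q n) (t2 q n))).
    { apply RInt_product_outside_cell; [lia | lra | lra | lra | rewrite P0 | rewrite P1];
        apply Hfree. }
    assert (Hr : Rabs (RInt g (a + h) (a + h + h)) <= Rabs (RInt g (t0 q n) (t2 q n))).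
    { apply RInt_product_outside_cell; [lia | lra | lra | lra | rewrite P1 | rewrite P2];
        apply Hfree. }
    unfold haar_sum. eapply Rle_trans; [apply Rabs_triang|]. rewrite Rabs_mult, He. lra.
Qed.

Lemma haar_sum_product_exceptional (i K : nat) (e : R) : q = i -> (S K <= 2 ^ i)%nat ->
  Rabs e = 1 -> Rabs (haar_sum g (INR K / 2 ^ i) (/ 2 ^ S i) e) <= 1.
Proof.
  intros Hqi HK He. destruct (haar_points_in_unit i K HK) as [Ha Hb].
  assert (Hh : 0 < / 2 ^ S i) by apply Rinv_0_lt_compat, pow2_pos.
  eapply Rle_trans; [apply haar_sum_product_le_width; auto; lra|].
  rewrite Hqi. simpl. pose proof (pow2_pos i). right. field. lra.
Qed.

Lemma haar_sum_product_bound (i K : nat) (e : R) : (S K <= 2 ^ i)%nat -> Rabs e = 1 ->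
  ((1 <= i)%nat -> e = -1) -> ~ ((p < Z.of_nat q)%Z /\ q = i) ->
  Rabs (haar_sum g (INR K / 2 ^ i) (/ 2 ^ S i) e)
  <= powerRZ 2 (- 2 * Z.max (Z.max (Z.of_nat i) p) (Z.of_nat q) + p + Z.of_nat q).
Proof.
  intros HK He He1 Hexc. destruct (haar_points_in_unit i K HK) as [Ha Hb].
  assert (Hh : 0 < / 2 ^ S i) by apply Rinv_0_lt_compat, pow2_pos.
  destruct (Z_le_gt_dec (Z.max (Z.of_nat i) (Z.of_nat q)) p) as [Hp | Hp].
  - eapply Rle_trans; [apply haar_sum_product_le_support; lia || lra|].
    rewrite pow_powerRZ, <- powerRZ_add by lra. apply powerRZ2_le. lia.
  - destruct (lt_dec q i) as [Hqi | Hiq].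
    + rewrite He1 by lia. eapply Rle_trans; [apply haar_sum_product_fine; lia|].
      rewrite haar_scale. apply powerRZ2_le. lia.
    + eapply Rle_trans; [apply haar_sum_product_coarse; lia || lra|].
      rewrite haar_scale, <- (powerRZ_1 2) at 1. rewrite <- powerRZ_add by lra.
      apply powerRZ2_le. lia.
Qed.

End Product.

Theorem mainTheorem4 (i p : Z) (q : nat) (j m n : nat)
  (Hij : index_ok i j) (Hpm : index_ok p m) (Hqn : (n <= 2 ^ q)%nat)
  (phi F : R -> R)
  (Hphi : is_schauder p m phi)
  (HF : is_primitive (fun s => phi s * chi q n s) F) :
  (~ ((p < Z.of_nat q)%Z /\ Z.of_nat q = i) ->
     Rabs (coef F i j)
       <= powerRZ 2 (- 2 * Z.max (Z.max i p) (Z.of_nat q) + p + Z.of_nat q)) /\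
  (((p < Z.of_nat q)%Z /\ Z.of_nat q = i) -> Rabs (coef F i j) <= 1).
Proof.
  pose proof (is_schauder_like p m phi Hpm Hphi) as Hlike.
  assert (Hzero : Rabs 0 <= 1 /\ forall z, Rabs 0 <= powerRZ 2 z)
    by (rewrite Rabs_R0; split; [lra | intros; apply powerRZ_le; lra]).
  destruct Hij as [[-> ->] | [Hi Hj]].
  { rewrite (coef_minus_one _ F 0 HF). split; intros; apply Hzero. }
  set (k := Z.to_nat i) in Hj. replace i with (Z.of_nat k) by lia.
  destruct (coef_haar_sum _ F k j (product_ex_RInt p phi q n Hlike) HF Hj)
    as [-> | (K & e & HK & He & He1 & ->)].
  { split; intros; apply Hzero. }
  split; intros Hcase.
  - apply (haar_sum_product_bound p phi q n Hlike); auto. intros [Hpq Hqk]. lia.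
  - apply (haar_sum_product_exceptional p phi q n Hlike); auto. lia.
Qed.
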